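(* The map $\psi$ is a homogeneous $(n-1)$-cocycle on $GL_n(\mathbb{C})$: for all $A,A_0,\dots,A_n\in GL_n(\mathbb{C})$, every $n$-tuple $\mathfrak{A}=(A_1,\dots,A_n)$ of elements of $GL_n(\mathbb{C})$, every homogeneous polynomial $P$ and every row vector $x\in\mathbb{C}^n$, $$\psi(A\mathfrak{A})(P,x)=\det(A)\,\psi(\mathfrak{A})(A^TP,xA)\qquad\text{and}\qquad \sum_{i=0}^n(-1)^i\psi(A_0,\dots,\widehat{A_i},\dots,A_n)(P,x)=0 .$$ Consequently $\psi$ defines a class in $H^{n-1}(GL_n(\mathbb{C}),S_0)$, where $S_0$ is the space of functions $H\times\mathbb{C}^n\to\mathbb{C}$ ($H$ the homogeneous polynomials of a fixed degree) with $GL_n(\mathbb{C})$-action $(A\phi)(P,x)=\det(A)\phi(A^TP,xA)$.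
   Context: Notation: $\langle x,v\rangle=\sum_ix_iv_i$ for a row vector $x$ and column vector $v$. For $\sigma\in M_n(\mathbb{C})$ with columns $\sigma_1,\dots,\sigma_n$: $f(\sigma)(x)=\det(\sigma)/\prod_j\langle x,\sigma_j\rangle$ if all $\langle x,\sigma_j\rangle\neq0$ and $0$ otherwise; $f(\sigma)(P,x)=P(-\partial_{x_1},\dots,-\partial_{x_n})f(\sigma)(x)$ (computed where all $\langle x,\sigma_j\rangle\ne0$, and $0$ elsewhere). $(A^TP)(y)=P(yA^T)$. For an $n$-tuple $\mathfrak{A}=(A_1,\dots,A_n)$ of matrices in $GL_n(\mathbb{C})$, write $A_{kj}$ for the $j$-th column of $A_k$; for $x\ne0$ let $j_k$ be the smallest index with $\langle x,A_{kj_k}\rangle\neq0$, and set $\psi(\mathfrak{A})(P,x)=f(A_{1j_1},\dots,A_{nj_n})(P,x)$; set $\psi(\mathfrak{A})(P,0)=0$. For $A\in GL_n(\mathbb{C})$, $A\mathfrak{A}=(AA_1,\dots,AA_n)$. *)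

From HB Require Import structures.
From mathcomp Require Import all_boot all_order all_algebra.
Set Implicit Arguments. Unset Strict Implicit. Unset Printing Implicit Defensive.
Import Order.TTheory GRing.Theory Num.Theory.
Local Open Scope ring_scope.

Section Defs.
Variables (C : numClosedFieldType) (n : nat).

Definition pair (x : 'rV[C]_n) (v : 'cV[C]_n) : C := (x *m v) 0 0.

(* Homogeneous polynomials of degree d in y = (y_1..y_n), represented as
   finite linear combinations of products of d linear forms:
   P(y) = sum_t  t.1 * prod_(v in t.2) <y, v>.  Every homogeneous polynomial
   of degree d has such a representation (monomials are products of
   coordinate forms). *)
Definition hpoly (d : nat) := seq (C * d.-tuple 'cV[C]_n).

Definition hpoly_eval d (P : hpoly d) (y : 'rV[C]_n) : C :=
  \sum_(t <- P) t.1 * \prod_(v <- t.2) pair y v.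

(* (A^T P)(y) = P(y A^T); since <y A^T, v> = <y, A^T v>, this maps each
   linear factor v to A^T v. *)
Definition hpolyT d (A : 'M[C]_n) (P : hpoly d) : hpoly d :=
  [seq (t.1, map_tuple (fun v => A^T *m v) t.2) | t <- P].

(* Rational functions of the form  sum c * prod_j <x, sigma_j>^(-k_j),
   represented by the list of pairs (c, k). *)
Definition ratf := seq (C * ('I_n -> nat)).

Definition ratf_eval (sigma : 'M[C]_n) (e : ratf) (x : 'rV[C]_n) : C :=
  \sum_(t <- e) t.1 * \prod_(j < n) (pair x (col j sigma)) ^- (t.2 j).

(* The operator -D_v, with D_v = sum_i v_i d/dx_i the directional derivative,
   computed by the power/Leibniz rule:
   -D_v (<x,sigma_j>^(-k)) = k <v,sigma_j> <x,sigma_j>^(-k-1),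
   where <v, sigma_j> = sum_i v_i sigma_ij = d/dv of <x, sigma_j>. *)
Definition negD (sigma : 'M[C]_n) (v : 'cV[C]_n) (e : ratf) : ratf :=
  flatten [seq [seq ((t.2 j)%:R * t.1 * (v^T *m col j sigma) 0 0,
                     fun i => (t.2 i + (i == j))%N) | j <- enum 'I_n] | t <- e].

Definition applyOp (sigma : 'M[C]_n) (vs : seq 'cV[C]_n) (e : ratf) : ratf :=
  foldr (negD sigma) e vs.

(* f(sigma)(P, x) = P(-d_1, ..., -d_n) [ det sigma / prod_j <x, sigma_j> ],
   computed where all <x, sigma_j> <> 0, and 0 elsewhere. *)
Definition fP d (sigma : 'M[C]_n) (P : hpoly d) (x : 'rV[C]_n) : C :=
  if [forall j : 'I_n, pair x (col j sigma) != 0] then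
    \sum_(t <- P) t.1 *
       ratf_eval sigma (applyOp sigma t.2 [:: (\det sigma, fun _ => 1%N)]) x
  else 0.

Definition firstcol (A : 'M[C]_n) (x : 'rV[C]_n) : 'cV[C]_n :=
  head 0 [seq col j A | j <- enum 'I_n & pair x (col j A) != 0].

Definition psi_sigma (As : 'I_n -> 'M[C]_n) (x : 'rV[C]_n) : 'M[C]_n :=
  \matrix_(i, k) firstcol (As k) x i 0.

Definition psi d (As : 'I_n -> 'M[C]_n) (P : hpoly d) (x : 'rV[C]_n) : C :=
  if x == 0 then 0 else fP (psi_sigma As x) P x.

End Defs.

From HB Require Import structures.
From mathcomp Require Import all_boot all_order all_algebra.
From mathcomp Require Import mpoly ring.
Set Implicit Arguments. Unset Strict Implicit. Unset Printing Implicit Defensive.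
Import Order.TTheory GRing.Theory Num.Theory.
Local Open Scope ring_scope.

(* Equivariance is bookkeeping: the columns chosen for A A_k at x are A times
   those chosen for A_k at xA, <x, A v> = <xA, v>, each operator -D_v turns
   into -D_(A^T v), and det (A sigma) = det A det sigma.

   For the cocycle identity fix x <> 0 and let v_0, ..., v_n be the columns
   selected at x, so that the i-th term is f(sigma_i) where sigma_i omits v_i.
   Every function involved is a polynomial in the y_l = <x, v_l>^-1, on which
   -D_w acts as the derivation sum_l <w, v_l> y_l^2 d/dy_l.  The Cramer relation
   sum_i (-1)^i det(sigma_i) v_i = 0 makes L = sum_i (-1)^i det(sigma_i)
   prod_(j <> i) y_j an eigenvector of each of these derivations, so every
   derivative of L is a multiple of L.  But L = (sum_i (-1)^i det(sigma_i)
   <x, v_i>) prod_l y_l vanishes, again by the Cramer relation. *)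

Lemma head_map (T U : Type) (x0 : T) (y0 : U) (f : T -> U) (s : seq T) :
  f x0 = y0 -> head y0 (map f s) = f (head x0 s).
Proof. by case: s => //= <-. Qed.

Lemma col_mulmx (R : pzSemiRingType) (m n p : nat) (A : 'M[R]_(m, n))
    (B : 'M[R]_(n, p)) (j : 'I_p) :
  col j (A *m B) = A *m col j B.
Proof. by rewrite !colE mulmxA. Qed.

Section Equivariance.
Variables (C : numClosedFieldType) (n : nat).
Implicit Types (A B sigma : 'M[C]_n) (x : 'rV[C]_n) (v : 'cV[C]_n) (e : ratf C n).

Lemma pair_mulmx x A v : pair x (A *m v) = pair (x *m A) v.
Proof. by rewrite /pair mulmxA. Qed.

Lemma pair_col x A j : pair x (col j A) = (x *m A) 0 j.
Proof. by rewrite /pair -col_mulmx mxE. Qed.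

Lemma firstcol_mulmx A B x : firstcol (A *m B) x = A *m firstcol B (x *m A).
Proof.
rewrite /firstcol -(head_map _ (mulmx0 _ A)) -map_comp.
rewrite (eq_filter (a2 := fun j => pair (x *m A) (col j B) != 0)) => [|j].
  by congr head; apply: eq_map => j /=; rewrite col_mulmx.
by rewrite col_mulmx pair_mulmx.
Qed.

Lemma firstcol_pair_neq0 A x : A \in unitmx -> x != 0 -> pair x (firstcol A x) != 0.
Proof.
move=> uA x_neq0.
have xA_neq0 : x *m A != 0.
  by apply: contraNneq x_neq0 => xA0; rewrite -(mulmxK uA x) xA0 mul0mx.
have [j xAj] : exists j, pair x (col j A) != 0.
  apply/existsP; apply: contraNT xA_neq0 => /existsPn xA0.
  by apply/eqP/matrixP => i k; rewrite ord1 -pair_col mxE; apply/eqP/negPn/xA0.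
rewrite /firstcol.
have : j \in [seq j <- enum 'I_n | pair x (col j A) != 0] by rewrite mem_filter xAj mem_enum.
by case: [seq j <- _ | _] (filter_all (fun j => pair x (col j A) != 0) (enum 'I_n))
  => [|j0 s] //= /andP[].
Qed.

Lemma psi_sigma_mulmx A (As : 'I_n -> 'M[C]_n) x :
  psi_sigma (fun k => A *m As k) x = A *m psi_sigma As (x *m A).
Proof.
apply/matrixP => i k; rewrite !mxE firstcol_mulmx mxE.
by apply: eq_bigr => l _; rewrite mxE.
Qed.

Definition ratf_scale (c : C) e : ratf C n := [seq (c * t.1, t.2) | t <- e].

Lemma negD_scale sigma v c e : negD sigma v (ratf_scale c e) = ratf_scale c (negD sigma v e).
Proof.
rewrite /negD /ratf_scale map_flatten -!map_comp; congr flatten; apply: eq_map => t /=.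
by rewrite -map_comp; apply: eq_map => j /=; rewrite mulrCA !mulrA.
Qed.

Lemma applyOp_scale sigma vs c e :
  applyOp sigma vs (ratf_scale c e) = ratf_scale c (applyOp sigma vs e).
Proof. by elim: vs => //= w vs ->; rewrite negD_scale. Qed.

Lemma ratf_eval_scale sigma c e x : ratf_eval sigma (ratf_scale c e) x = c * ratf_eval sigma e x.
Proof. by rewrite /ratf_eval big_map big_distrr; apply: eq_bigr => t _ /=; rewrite mulrA. Qed.

Lemma negD_mulmx A sigma v e : negD (A *m sigma) v e = negD sigma (A^T *m v) e.
Proof.
congr flatten; apply: eq_map => t; apply: eq_map => j.
by rewrite col_mulmx trmx_mul trmxK mulmxA.
Qed.

Lemma applyOp_mulmx A sigma vs e :
  applyOp (A *m sigma) vs e = applyOp sigma (map (fun v => A^T *m v) vs) e.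
Proof. by elim: vs => //= w vs ->; rewrite negD_mulmx. Qed.

Lemma ratf_eval_mulmx A sigma e x : ratf_eval (A *m sigma) e x = ratf_eval sigma e (x *m A).
Proof.
apply: eq_bigr => t _; congr (_ * _); apply: eq_bigr => j _.
by rewrite col_mulmx pair_mulmx.
Qed.

Lemma fP_mulmx d A sigma (P : hpoly C n d) x :
  fP (A *m sigma) P x = \det A * fP sigma (hpolyT A P) (x *m A).
Proof.
rewrite /fP (eq_forallb (fun j => _ : _ = (pair (x *m A) (col j sigma) != 0))); last first.
  by move=> j; rewrite col_mulmx pair_mulmx.
case: ifP => _; last by rewrite mulr0.
rewrite /hpolyT big_map big_distrr; apply: eq_bigr => t _ /=.
rewrite ratf_eval_mulmx applyOp_mulmx det_mulmx.
rewrite (_ : [:: _] = ratf_scale (\det A) [:: (\det sigma, fun _ => 1%N)]) //.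
by rewrite applyOp_scale ratf_eval_scale mulrCA.
Qed.

Lemma psi_mulmx d A (As : 'I_n -> 'M[C]_n) (P : hpoly C n d) x : A \in unitmx ->
  psi (fun k => A *m As k) P x = \det A * psi As (hpolyT A P) (x *m A).
Proof.
move=> uA; rewrite /psi (_ : (x *m A == 0) = (x == 0)); last first.
  by apply/eqP/eqP => [xA0|->]; [rewrite -(mulmxK uA x) xA0 mul0mx | rewrite mul0mx].
by case: eqP => _; rewrite ?mulr0 // psi_sigma_mulmx fP_mulmx.
Qed.

End Equivariance.

Section InverseDerivation.
Variables (R : comNzRingType) (N : nat).
Local Notation MP := {mpoly R[N]}.
Implicit Types (a : 'I_N -> R) (p q : MP).

(* 'X_l plays the role of <x, v_l>^-1 and [a l] that of <w, v_l>, since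
   -D_w <x, v>^-1 = <w, v> <x, v>^-2. *)
Definition invderiv a p : MP := \sum_(l < N) (a l)%:MP * 'X_l ^+ 2 * mderiv l p.

Lemma invderivD a p q : invderiv a (p + q) = invderiv a p + invderiv a q.
Proof.
by rewrite /invderiv -big_split; apply: eq_bigr => l _; rewrite mderivD mulrDr.
Qed.

Lemma invderiv0 a : invderiv a 0 = 0.
Proof. by rewrite /invderiv big1 // => l _; rewrite mderiv0 mulr0. Qed.

Lemma invderiv_sum a (I : Type) (s : seq I) (F : I -> MP) :
  invderiv a (\sum_(i <- s) F i) = \sum_(i <- s) invderiv a (F i).
Proof. exact: (big_morph _ (invderivD a) (invderiv0 a)). Qed.

Lemma invderivCM a c p : invderiv a (c%:MP * p) = c%:MP * invderiv a p.
Proof.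
by rewrite /invderiv mulr_sumr; apply: eq_bigr => l _; rewrite mderiv_mulC; ring.
Qed.

Lemma invderiv1 a : invderiv a 1 = 0.
Proof. by rewrite /invderiv big1 // => l _; rewrite -mpolyC1 mderivC mulr0. Qed.

Lemma invderivM a p q : invderiv a (p * q) = invderiv a p * q + p * invderiv a q.
Proof.
rewrite /invderiv mulr_suml mulr_sumr -big_split; apply: eq_bigr => l _ /=.
by rewrite mderivM; ring.
Qed.

Lemma invderiv_prod a (I : Type) (s : seq I) (F G : I -> MP) :
  (forall i, invderiv a (F i) = G i * F i) ->
  invderiv a (\prod_(i <- s) F i) = (\sum_(i <- s) G i) * \prod_(i <- s) F i.
Proof.
move=> dF; elim: s => [|i s IHs]; first by rewrite !big_nil invderiv1 mul0r.
by rewrite !big_cons invderivM IHs dF; ring.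
Qed.

Lemma mderivXU (l m : 'I_N) : mderiv m ('X_l : MP) = (l == m)%:R.
Proof.
rewrite mderivX mnm1E; case: eqP => [->|_]; last by rewrite scale0r.
by rewrite -[X in (X - _)%MM]add0m addmK mpolyX0 scale1r.
Qed.

Lemma invderivX a l : invderiv a 'X_l = (a l)%:MP * 'X_l * 'X_l.
Proof.
rewrite /invderiv (bigD1 l) //= big1 => [|m /negbTE ml]; last first.
  by rewrite mderivXU eq_sym ml mulr0.
by rewrite mderivXU eqxx mulr1 addr0 expr2 mulrA.
Qed.

Lemma invderivXn a l k :
  invderiv a ('X_l ^+ k) = (k%:R * a l)%:MP * 'X_l * 'X_l ^+ k.
Proof.
elim: k => [|k IHk]; first by rewrite expr0 invderiv1 mul0r mpolyC0 !mul0r.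
rewrite exprS invderivM IHk invderivX !mpolyCM -natr1 mpolyCD mpolyC_nat mpolyC1.
ring.
Qed.

Definition invderivs (as_ : seq ('I_N -> R)) p : MP := foldr invderiv p as_.

Lemma invderivsD as_ p q : invderivs as_ (p + q) = invderivs as_ p + invderivs as_ q.
Proof. by elim: as_ => //= a as_ ->; rewrite invderivD. Qed.

Lemma invderivs0 as_ : invderivs as_ 0 = 0.
Proof. by elim: as_ => //= a as_ ->; rewrite invderiv0. Qed.

Lemma invderivs_sum as_ (I : Type) (s : seq I) (F : I -> MP) :
  invderivs as_ (\sum_(i <- s) F i) = \sum_(i <- s) invderivs as_ (F i).
Proof. exact: (big_morph _ (invderivsD as_) (invderivs0 as_)). Qed.

Lemma invderivsCM as_ c p : invderivs as_ (c%:MP * p) = c%:MP * invderivs as_ p.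
Proof. by elim: as_ => //= a as_ ->; rewrite invderivCM. Qed.

End InverseDerivation.

Section CramerRelation.
Variables (R : comPzRingType) (n : nat) (v : 'I_n.+1 -> 'cV[R]_n).

Definition dropcol (i : 'I_n.+1) : 'M[R]_n := \matrix_(r, k) v (lift i k) r 0.

Lemma col_dropcol i j : col j (dropcol i) = v (lift i j).
Proof. by apply/matrixP => r q; rewrite !mxE ord1. Qed.

Definition cramer_coef (i : 'I_n.+1) : R := (-1) ^+ i * \det (dropcol i).

(* Expand along its first row the determinant of the n.+1 x n.+1 matrix whose
   first row repeats its row r.+1 (the r-th coordinates of the v l). *)
Lemma cramer_relation : \sum_i cramer_coef i *: v i = 0.
Proof.
apply/matrixP => r q; rewrite ord1 summxE mxE.
pose B : 'M[R]_n.+1 :=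
  \matrix_(p, l) v l (if unlift ord0 p is Some r' then r' else r) 0.
have detB0 : \det B = 0.
  apply: (@determinant_alternate _ _ _ ord0 (lift ord0 r)); first exact: neq_lift.
  by move=> l; rewrite !mxE unlift_none liftK.
rewrite -[RHS]detB0 (expand_det_row B ord0); apply: eq_bigr => j _.
rewrite !mxE unlift_none /cofactor /cramer_coef add0n mulrC.
by congr (_ * (_ * \det _)); apply/matrixP => p k; rewrite !mxE liftK.
Qed.

Lemma cramer_relation_row (u : 'rV[R]_n) :
  \sum_i cramer_coef i * (u *m v i) 0 0 = 0.
Proof.
rewrite -[RHS](_ : (u *m \sum_i cramer_coef i *: v i) 0 0 = 0); last first.
  by rewrite cramer_relation mulmx0 mxE.
rewrite mulmx_sumr summxE.
by apply: eq_bigr => i _; rewrite -scalemxAr [RHS]mxE.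
Qed.

End CramerRelation.

Section OmittedMonomials.
Variables (R : comNzRingType) (n : nat).
Local Notation MP := {mpoly R[n.+1]}.

Definition omit_mono (i : 'I_n.+1) : MP := \prod_(j < n) 'X_(lift i j).

Definition linform (a : 'I_n.+1 -> R) : MP := \sum_l (a l)%:MP * 'X_l.

Definition omit_comb (c : 'I_n.+1 -> R) : MP := \sum_i (c i)%:MP * omit_mono i.

Lemma X_omit_mono i : 'X_i * omit_mono i = \prod_l 'X_l.
Proof. by rewrite (bigD1_ord i). Qed.

Lemma invderiv_omit_mono a i :
  invderiv a (omit_mono i) = (linform a - (a i)%:MP * 'X_i) * omit_mono i.
Proof.
rewrite (@invderiv_prod _ _ _ _ _ _ (fun j => (a (lift i j))%:MP * 'X_(lift i j))).
  by rewrite /linform (bigD1_ord i) //= addrC addrK.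
by move=> j; rewrite invderivX.
Qed.

Lemma invderiv_omit_comb c a : \sum_i c i * a i = 0 ->
  invderiv a (omit_comb c) = linform a * omit_comb c.
Proof.
move=> ca0; rewrite invderiv_sum (eq_bigr (fun i =>
  linform a * ((c i)%:MP * omit_mono i) - (c i * a i)%:MP * \prod_l 'X_l)).
  by rewrite sumrB -mulr_sumr -mulr_suml -rmorph_sum /= ca0 mpolyC0 mul0r subr0.
by move=> i _; rewrite invderivCM invderiv_omit_mono -(X_omit_mono i) mpolyCM; ring.
Qed.

Lemma invderivs_omit_comb c (as_ : seq ('I_n.+1 -> R)) :
  all (fun a => \sum_i c i * a i == 0) as_ ->
  exists Q, invderivs as_ (omit_comb c) = omit_comb c * Q.
Proof.
elim: as_ => [|a as_ IHas] /=; first by exists 1; rewrite mulr1.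
case/andP=> /eqP ca0 /IHas[Q IHQ].
exists (linform a * Q + invderiv a Q).
by rewrite IHQ invderivM invderiv_omit_comb // mulrDr; congr (_ + _); ring.
Qed.

End OmittedMonomials.

Lemma meval_inv_omit_comb (F : fieldType) (n : nat) (c y : 'I_n.+1 -> F) :
  (forall l, y l != 0) -> \sum_i c i * y i = 0 ->
  (omit_comb c).@[fun l => (y l)^-1] = 0.
Proof.
move=> y_neq0 cy0; rewrite raddf_sum /=.
transitivity ((\sum_i c i * y i) * \prod_l (y l)^-1); last first.
  by rewrite cy0 mul0r.
rewrite mulr_suml; apply: eq_bigr => i _; rewrite mevalM mevalC /omit_mono rmorph_prod /=.
rewrite (bigD1_ord i) //= -mulrA mulVKf //; congr (_ * _).
by apply: eq_bigr => j _; rewrite mevalXU.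
Qed.

Section RationalFunctionsAsPolynomials.
Variables (C : numClosedFieldType) (n : nat).
Local Notation MP := {mpoly C[n.+1]}.

(* The variables of [ratf C n] are placed at the positions [lift i j]; the
   missing variable i is the column omitted from the matrix. *)
Definition liftmono (i : 'I_n.+1) (k : 'I_n -> nat) : MP :=
  \prod_(j < n) 'X_(lift i j) ^+ k j.

Definition ratf_poly i (e : ratf C n) : MP := \sum_(t <- e) t.1%:MP * liftmono i t.2.

Lemma liftmono1 i : liftmono i (fun _ => 1%N) = omit_mono C i.
Proof. by apply: eq_bigr => j _; rewrite expr1. Qed.

Lemma liftmono_incr i k j :
  liftmono i (fun l => (k l + (l == j))%N) = 'X_(lift i j) * liftmono i k.
Proof.
rewrite /liftmono (bigD1 j) //= [in RHS](bigD1 j) //= eqxx addn1 exprS -mulrA.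
by congr (_ * (_ * _)); apply: eq_bigr => l /negbTE ->; rewrite addn0.
Qed.

Lemma invderiv_liftmono a i k : invderiv a (liftmono i k) =
  (\sum_(j < n) ((k j)%:R * a (lift i j))%:MP * 'X_(lift i j)) * liftmono i k.
Proof. by apply: invderiv_prod => j; rewrite invderivXn. Qed.

Lemma ratf_poly_negD sigma w e a i :
  (forall j, (w^T *m col j sigma) 0 0 = a (lift i j)) ->
  ratf_poly i (negD sigma w e) = invderiv a (ratf_poly i e).
Proof.
move=> wa; rewrite /ratf_poly /negD big_flatten big_map invderiv_sum.
apply: eq_bigr => t _; rewrite big_map invderivCM invderiv_liftmono enumT.
rewrite mulr_suml mulr_sumr; apply: eq_bigr => j _.
by rewrite liftmono_incr wa !mpolyCM mpolyC_nat; ring.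
Qed.

Lemma ratf_eval_meval sigma e x i (y : 'I_n.+1 -> C) :
  (forall j, pair x (col j sigma) = y (lift i j)) ->
  ratf_eval sigma e x = (ratf_poly i e).@[fun l => (y l)^-1].
Proof.
move=> xy; rewrite /ratf_eval /ratf_poly raddf_sum; apply: eq_bigr => t _.
rewrite /= mevalM mevalC /liftmono rmorph_prod; congr (_ * _).
by apply: eq_bigr => j _; rewrite rmorphXn /= mevalXU xy exprVn.
Qed.

End RationalFunctionsAsPolynomials.

Section CocycleIdentity.
Variables (C : numClosedFieldType) (n : nat) (v : 'I_n.+1 -> 'cV[C]_n).

Definition pair_coefs (w : 'cV[C]_n) (l : 'I_n.+1) : C := (w^T *m v l) 0 0.

Lemma ratf_poly_applyOp i vs e :
  ratf_poly i (applyOp (dropcol v i) vs e) = invderivs (map pair_coefs vs) (ratf_poly i e).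
Proof.
by elim: vs => //= w vs <-; apply: ratf_poly_negD => j; rewrite col_dropcol.
Qed.

Lemma alternating_sum_applyOp x vs : (forall l, pair x (v l) != 0) ->
  \sum_(i < n.+1) (-1) ^+ i * ratf_eval (dropcol v i)
     (applyOp (dropcol v i) vs [:: (\det (dropcol v i), fun _ => 1%N)]) x = 0.
Proof.
move=> xv_neq0.
have cramer_pairs : all (fun a => \sum_i cramer_coef v i * a i == 0) (map pair_coefs vs).
  by rewrite all_map; apply/allP => w _ /=; rewrite cramer_relation_row.
have [Q derivs_mul] := invderivs_omit_comb cramer_pairs.
have comb0 := meval_inv_omit_comb xv_neq0 (cramer_relation_row v x).
transitivity ((invderivs (map pair_coefs vs) (omit_comb (cramer_coef v))).@[
    fun l => (pair x (v l))^-1]); last by rewrite derivs_mul mevalM comb0 mul0r.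
rewrite /omit_comb invderivs_sum raddf_sum /=; apply: eq_bigr => i _.
rewrite invderivsCM mevalM mevalC /cramer_coef -mulrA; congr (_ * _).
rewrite (@ratf_eval_meval _ _ _ _ _ i (fun l => pair x (v l))) => [|j].
  by rewrite ratf_poly_applyOp /ratf_poly big_seq1 liftmono1 invderivsCM mevalM mevalC.
by rewrite col_dropcol.
Qed.

Lemma fP_alternating_sum d (P : hpoly C n d) x : (forall l, pair x (v l) != 0) ->
  \sum_(i < n.+1) (-1) ^+ i * fP (dropcol v i) P x = 0.
Proof.
move=> xv_neq0.
have fP_dropcol i : fP (dropcol v i) P x = \sum_(t <- P) t.1 *
    ratf_eval (dropcol v i) (applyOp (dropcol v i) t.2 [:: (\det (dropcol v i), fun _ => 1%N)]) x.
  by rewrite /fP (_ : [forall j, _] = true) //; apply/forallP => j; rewrite col_dropcol.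
under eq_bigr => i _ do rewrite fP_dropcol mulr_sumr.
rewrite exchange_big big1 // => t _.
under eq_bigr => i _ do rewrite mulrCA.
by rewrite -mulr_sumr alternating_sum_applyOp // mulr0.
Qed.

End CocycleIdentity.

Theorem mainTheorem2 (C : numClosedFieldType) (n d : nat) :
  (forall (A : 'M[C]_n) (As : 'I_n -> 'M[C]_n),
      A \in unitmx -> (forall k, As k \in unitmx) ->
      forall (P : hpoly C n d) (x : 'rV[C]_n),
        psi (fun k => A *m As k) P x = \det A * psi As (hpolyT A P) (x *m A))
  /\
  (forall As : 'I_n.+1 -> 'M[C]_n,
      (forall k, As k \in unitmx) ->
      forall (P : hpoly C n d) (x : 'rV[C]_n),
        \sum_(i < n.+1) (-1) ^+ i * psi (fun k : 'I_n => As (lift i k)) P x = 0).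
Proof.
split=> [A As uA _ P x | As uAs P x]; first exact: psi_mulmx.
have [->|x_neq0] := eqVneq x 0.
  by rewrite big1 // => i _; rewrite /psi eqxx mulr0.
rewrite -[RHS](@fP_alternating_sum _ _ (fun l => firstcol (As l) x) _ P x); last first.
  by move=> l; apply: firstcol_pair_neq0.
by apply: eq_bigr => i _; rewrite /psi (negbTE x_neq0).
Qed.
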